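(* (a) For $n\ge1$, the degree of $P_n$ is at most $n$. (b) For every $n$, $n!\,P_n(y)$ has integer coefficients.
   Context: Define polynomials $P_n(y)$ by $P_0(y)=y-1$ and, for $n\ge1$, $P_n=nP_{n-1}-P'_{n-1}+\frac{1}{n}\sum_{k=1}^{n-1}k\{(k-1)P_{k-1}-P_k-P'_{k-1}\}P_{n-k-1}$ (primes denote derivatives in $y$). Equivalently, $1+\sum_{n\ge1}P_{n-1}(y)x^{-n}$ is the unique solution $V$, in the ring of formal series $\sum_{n\ge0}q_n(y)x^{-n}$ with $\deg q_n\le n$, of $V=1+\frac{y}{x}-\frac{1}{x}V-V_x-\frac{1}{x}V_y+\frac{1}{x}\log V$, where $V_x,V_y$ are termwise formal derivatives and $\log$ is the formal logarithmic series. *)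

From mathcomp Require Import all_boot all_order all_algebra.
Set Implicit Arguments. Unset Strict Implicit. Unset Printing Implicit Defensive.
Import Order.TTheory GRing.Theory Num.Theory.
Local Open Scope ring_scope.

(* Given s = [:: P_0; ...; P_(n-1)], compute P_n by the recursion
   P_n = n P_{n-1} - P'_{n-1}
         + (1/n) sum_{k=1}^{n-1} k ((k-1) P_{k-1} - P_k - P'_{k-1}) P_{n-k-1}. *)
Definition Pnext (n : nat) (s : seq {poly rat}) : {poly rat} :=
  let P := fun k => nth 0 s k in
  n%:R *: P n.-1 - (P n.-1)^`()
  + (n%:R)^-1 *: \sum_(1 <= k < n)
        k%:R *: (((k.-1)%:R *: P k.-1 - P k - (P k.-1)^`()) * P (n - k).-1).

Fixpoint Pseq (n : nat) : seq {poly rat} :=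
  match n with
  | 0 => [:: 'X - 1]
  | m.+1 => rcons (Pseq m) (Pnext m.+1 (Pseq m))
  end.

Definition Ppoly (n : nat) : {poly rat} := nth 0 (Pseq n) n.

From mathcomp Require Import all_boot all_order all_algebra.
From mathcomp Require Import zify ring.
Import Order.TTheory GRing.Theory Num.Theory.
Local Open Scope ring_scope.

(** Degrees: with
    [deg P_m <= max(m, 1)] (the [1] is forced by [P_0 = y - 1]) and
    [deg B_k <= k], each summand [k B_k P_(n-k-1)] has degree at most
    [k + max(n-k-1, 1) <= n].  Integrality: after multiplying by [n!], the prefactor
    [n! k / n = (n-1)! k] of the k-th summand splits as
    [(n-1) C(n-2, k-1) k! (n-k-1)!], so the summand is a natural multiple of
    [(k! B_k) ((n-k-1)! P_(n-k-1))], and [k! B_k] only involves [k! P_k],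
    [(k-1)! P_(k-1)] and its derivative. *)

Lemma size_Pseq n : size (Pseq n) = n.+1.
Proof. by elim: n => //= n IH; rewrite size_rcons IH. Qed.

Lemma nth_Pseq n k : (k <= n)%N -> nth 0 (Pseq n) k = Ppoly k.
Proof.
elim: n => [|n IH]; first by rewrite leqn0 => /eqP ->.
rewrite leq_eqVlt => /orP[/eqP -> //|lt_kn].
by rewrite /= nth_rcons size_Pseq lt_kn IH.
Qed.

(* The bracket of the recursion at index [k.+1], i.e. [B_(k+1)] above. *)
Definition Pcorr k : {poly rat} :=
  k%:R *: Ppoly k - Ppoly k.+1 - (Ppoly k)^`().

Lemma Ppoly_rec n :
  Ppoly n.+1 = n.+1%:R *: Ppoly n - (Ppoly n)^`()
    + n.+1%:R^-1 *: \sum_(k < n) k.+1%:R *: (Pcorr k * Ppoly (n - k.+1)).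
Proof.
rewrite {1}/Ppoly /= nth_rcons size_Pseq ltnn eqxx /Pnext /= nth_Pseq //.
congr (_ + _ *: _); rewrite big_add1 /= big_mkord; apply: eq_bigr => k _.
have lt_kn := ltn_ord k.
by rewrite /Pcorr subSS -subnS !nth_Pseq //; lia.
Qed.

Lemma size_deriv_leq {R : nzSemiRingType} (p : {poly R}) :
  (size p^`() <= size p)%N.
Proof.
have [->|p_neq0] := eqVneq p 0; first by rewrite deriv0.
exact/ltnW/lt_size_deriv.
Qed.

Lemma size_scale_sub_deriv {R : nzRingType} (c : R) (p : {poly R}) :
  (size (c *: p - p^`())%R <= size p)%N.
Proof.
apply: leq_trans (size_polyD _ _) _.
by rewrite size_polyN geq_max size_scale_leq size_deriv_leq.
Qed.

Lemma size_Ppoly n : (size (Ppoly n) <= (maxn n 1).+1)%N.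
Proof.
elim/ltn_ind: n => -[_|n IH]; first by rewrite /Ppoly /= size_XsubC.
have size_Pcorr k : (k < n)%N -> (size (Pcorr k) <= k.+2)%N.
  move=> lt_kn; have le_Pk : (size (Ppoly k) <= k.+2)%N.
    by apply: leq_trans (IH k _) _; lia.
  apply: leq_trans (size_polyD _ _) _; rewrite size_polyN geq_max.
  rewrite (leq_trans (size_deriv_leq _) le_Pk) andbT.
  apply: leq_trans (size_polyD _ _) _; rewrite size_polyN geq_max.
  rewrite (leq_trans (size_scale_leq _ _) le_Pk) /=.
  by apply: leq_trans (IH k.+1 _) _; lia.
rewrite Ppoly_rec; apply: leq_trans (size_polyD _ _) _; rewrite geq_max.
apply/andP; split.
  by apply: leq_trans (size_scale_sub_deriv _ _) _; apply: leq_trans (IH n _) _; lia.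
apply: leq_trans (size_scale_leq _ _) _; apply: leq_trans (size_sum _ _ _) _.
apply/bigmax_leqP => -[k /= lt_kn] _; apply: leq_trans (size_scale_leq _ _) _.
apply: leq_trans (size_polyMleq _ _) _.
have := size_Pcorr k lt_kn; have := IH (n - k.+1)%N ltac:(lia).
(* [lia] needs the two sizes abstracted as plain variables. *)
by move: (size (Pcorr k)) (size (Ppoly _)); lia.
Qed.

Lemma fact_mul_binS n k : (k < n)%N ->
  (n`! * k.+1 = n * 'C(n.-1, k) * (k.+1`! * (n - k.+1)`!))%N.
Proof.
case: n => // n lt_kn; rewrite factS -(bin_fact (lt_kn : k <= n)%N) subSS factS.
ring.
Qed.

Section FactorialIntegrality.

Variable S : subringClosed rat.

Lemma polyOver_scale_nat (c : nat) (p : {poly rat}) :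
  p \is a polyOver S -> c%:R *: p \is a polyOver S.
Proof. by move=> Sp; rewrite scaler_nat rpredMn. Qed.

Lemma polyOver_scale_fact m n (p : {poly rat}) : (m <= n)%N ->
  m`!%:R *: p \is a polyOver S -> n`!%:R *: p \is a polyOver S.
Proof.
move=> le_mn Sp; rewrite (fact_split le_mn) mulnC natrM -scalerA.
exact: polyOver_scale_nat.
Qed.

Lemma fact_Ppoly_polyOver n : n`!%:R *: Ppoly n \is a polyOver S.
Proof.
elim/ltn_ind: n => -[_|n IH].
  by rewrite /Ppoly /= scale1r -polyC1 polyOverXsubC rpred1.
have IHfact k m : (k <= m)%N -> (k <= n)%N -> m`!%:R *: Ppoly k \is a polyOver S.
  by move=> le_km le_kn; apply: polyOver_scale_fact le_km (IH k _).
have fact_Pcorr k : (k < n)%N -> k.+1`!%:R *: Pcorr k \is a polyOver S.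
  move=> lt_kn; rewrite /Pcorr !scalerBr; apply: rpredB; [apply: rpredB|].
  - by rewrite scalerA mulrC -scalerA polyOver_scale_nat ?IHfact 1?ltnW.
  - exact: IH.
  - by rewrite -derivZ polyOver_deriv ?IHfact 1?ltnW.
rewrite Ppoly_rec scalerDr scalerBr; apply: rpredD; [apply: rpredB|].
- by rewrite scalerA mulrC -scalerA polyOver_scale_nat ?IHfact.
- by rewrite -derivZ polyOver_deriv ?IHfact.
rewrite scalerA factS natrM mulrAC mulfV ?pnatr_eq0 // mul1r scaler_sumr.
apply: rpred_sum => -[k /= lt_kn] _.
rewrite scalerA -natrM fact_mul_binS // natrM -scalerA polyOver_scale_nat //.
rewrite natrM -scalerA scalerAr scalerAl rpredM ?fact_Pcorr ?IH //; lia.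
Qed.

End FactorialIntegrality.

Theorem theorem4p5 :
  (forall n : nat, (1 <= n)%N -> (size (Ppoly n) <= n.+1)%N) /\
  (forall n : nat, forall i : nat, (n`!%:R * (Ppoly n)`_i : rat) \is a Num.int).
Proof.
split=> [n n_gt0|n i].
  by apply: leq_trans (size_Ppoly n) _; rewrite (maxn_idPl n_gt0).
by rewrite -coefZ; move: i; apply/polyOverP/fact_Ppoly_polyOver.
Qed.
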